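(* Let $\mathcal A$ be a finite set, $\pi^{\mathrm{ref}}\in\Delta(\mathcal A)$ with full support, $\eta>0$, and let $Q^{(1)},Q^{(2)},\dots\in\mathbb R^{\mathcal A}$ satisfy $\|Q^{(t)}\|_\infty\le1$. Set $f^{(t)}(\pi)=\langle\pi,Q^{(t)}\rangle-\eta^{-1}\mathrm{KL}(\pi\|\pi^{\mathrm{ref}})$. Define $\pi^{(1)}=\pi^{\mathrm{ref}}$ and, for $t\ge1$, $$\pi^{(t+1)}(a)\propto\big(\pi^{\mathrm{ref}}(a)\big)^{1/t}\big(\pi^{(t)}(a)\big)^{(t-1)/t}\exp\!\big(\tfrac{\eta}{t}Q^{(t)}(a)\big).$$ Then for every $T\ge1$, $$\max_{\pi\in\Delta(\mathcal A)}\frac1T\sum_{t=1}^Tf^{(t)}(\pi)-\frac1T\sum_{t=1}^Tf^{(t)}(\pi^{(t)})\le\mathcal O\!\left(\frac{\eta(1+\log T)}{T}\right).$$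
   Context: $\mathrm{KL}(p\|q)=\sum_a p(a)\log(p(a)/q(a))$; $\langle\cdot,\cdot\rangle$ is the standard inner product on $\mathbb R^{\mathcal A}$; $\mathcal O$ hides an absolute constant. *)

From HB Require Import structures.
From mathcomp Require Import all_boot all_order all_algebra.
From mathcomp Require Import all_classical all_reals all_analysis.
Set Implicit Arguments. Unset Strict Implicit. Unset Printing Implicit Defensive.
Import Order.TTheory GRing.Theory Num.Theory.
Local Open Scope ring_scope.

Section Defs.
Variables (R : realType) (A : finType).

Definition in_simplex (p : A -> R) : Prop :=
  (forall a, 0 <= p a) /\ \sum_(a : A) p a = 1.

Definition inner (p q : A -> R) : R := \sum_(a : A) p a * q a.

Definition KL (p q : A -> R) : R :=
  \sum_(a : A) (if p a == 0 then 0 else p a * ln (p a / q a)).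

Definition reg_obj (eta : R) (piref Qt pi : A -> R) : R :=
  inner pi Qt - eta^-1 * KL pi piref.

Definition mwu_step (eta : R) (piref : A -> R) (t : nat) (Qt pit : A -> R)
  : A -> R :=
  let w := fun a => powR (piref a) (t%:R^-1) *
                    powR (pit a) ((t%:R - 1) / t%:R) *
                    expR (eta / t%:R * Qt a) in
  fun a => w a / \sum_(b : A) w b.

(* pi_iter n = pi^(n+1); so pi^(t) = pi_iter (t.-1) for t >= 1 *)
Fixpoint pi_iter (eta : R) (piref : A -> R) (Q : nat -> A -> R) (n : nat)
  : A -> R :=
  match n with
  | 0 => piref
  | n'.+1 => mwu_step eta piref n'.+1 (Q n'.+1) (pi_iter eta piref Q n')
  end.

End Defs.

From HB Require Import structures.
From mathcomp Require Import all_boot all_order all_algebra.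
From mathcomp Require Import all_classical all_reals all_analysis.
From mathcomp Require Import ring lra.
Import Order.TTheory GRing.Theory Num.Theory.
Local Open Scope ring_scope.

(* The iterates are Gibbs distributions: pi^(n+1) is proportional to
   pi_ref * exp(eta * (Q^(1) + ... + Q^(n)) / n), i.e. the maximiser over the
   simplex of the cumulative objective f^(1) + ... + f^(n) ("follow the
   regularised leader").  The be-the-leader argument bounds the regret by the
   sum of the stability terms <pi^(t+1) - pi^(t), Q^(t)>, plus a nonpositive KL
   term.  Consecutive logits differ by at most 2 eta / t in sup norm, so the
   corresponding Gibbs distributions are O(eta / t) apart in l1, and summing
   the harmonic series gives O(eta (1 + log T)). *)

Section RealFacts.
Context {R : realType}.

Lemma ln_le_subr1 {x : R} : 0 < x -> ln x <= x - 1.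
Proof. by move=> x0; have := @le_ln1Dx R (x - 1); rewrite [1 + _]addrC subrK; apply; lra. Qed.

Lemma harmonic_le_1Dln (T : nat) : (1 <= T)%N ->
  \sum_(1 <= t < T.+1) (t%:R : R)^-1 <= 1 + ln (T%:R : R).
Proof.
case: T => [//|T] _; elim: T => [|T IH]; first by rewrite big_nat1 invr1 ln1 addr0.
rewrite big_nat_recr //=.
have t1 : 0 < T.+1%:R :> R by rewrite ltr0n.
have t2 : 0 < T.+2%:R :> R by rewrite ltr0n.
have := ln_le_subr1 (divr_gt0 t1 t2); rewrite ln_div ?posrE //.
have -> : T.+1%:R / T.+2%:R - 1 = - T.+2%:R^-1 :> R.
  by field; rewrite gt_eqF.
move=> h; apply: le_trans (lerD IH (lexx _)) _.
by rewrite -addrA lerD2l -lerBrDl -opprB lerNr.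
Qed.

Lemma le_linear_of_le_expR_subr1 (u D : R) :
  0 <= u -> D <= 2 -> D <= 2 * (expR u - 1) -> D <= 2 * expR 1 * u.
Proof.
move=> u0 D2 De.
have e1 : 2 <= expR (1 : R) by have := @expR_ge1Dx R 1; lra.
have [u1|u1] := leP u 1; last by nra.
(* on [0, 1], e^u - 1 <= u e^u <= e u *)
have eu := expR_gt0 u.
have h1 : expR u - u * expR u <= 1.
  have := ler_wpM2l (ltW eu) (expR_ge1Dx (- u)).
  by rewrite expRN mulfV ?gt_eqF //; lra.
have h2 : u * expR u <= u * expR 1 by apply: ler_wpM2l; rewrite ?ler_expR.
nra.
Qed.

End RealFacts.

Section Simplex.
Context {R : realType} {A : finType}.

Lemma simplex_inhabited {p : A -> R} : in_simplex p -> inhabited A.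
Proof.
case=> _ p1; case: (pickP (@predT A)) => [a _|A0]; first by constructor.
by move: p1; rewrite big_pred0 // => /eqP; rewrite eq_sym oner_eq0.
Qed.

Lemma inner_subl_le_l1 (x y q : A -> R) : (forall a, `|q a| <= 1) ->
  inner x q - inner y q <= \sum_a `|x a - y a|.
Proof.
move=> q1; rewrite /inner -sumrB; apply: ler_sum => a _.
rewrite -mulrBl; apply: le_trans (ler_norm _) _; rewrite normrM.
exact: ler_piMr.
Qed.

Lemma KL_ge0 (p q : A -> R) : in_simplex p -> (forall a, 0 < q a) ->
  \sum_a q a <= 1 -> 0 <= KL p q.
Proof.
case=> p0 p1 q0 q1.
apply: (@le_trans _ _ (\sum_a (p a - q a))); first by rewrite sumrB p1 subr_ge0.
apply: ler_sum => a _.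
have [->|pa] := eqVneq (p a) 0; first by rewrite sub0r oppr_le0 ltW.
have pa0 : 0 < p a by rewrite lt_def pa p0.
have := ler_wpM2l (ltW pa0) (ln_le_subr1 (divr_gt0 (q0 a) pa0)).
rewrite mulrBr mulr1 mulrCA mulfV // mulr1 !ln_div ?posrE // !mulrBr.
lra.
Qed.

Lemma KL_self (p : A -> R) : KL p p = 0.
Proof.
by rewrite /KL big1 // => a _; case: eqP => // /eqP p0; rewrite divff // ln1 mulr0.
Qed.

End Simplex.

Section Gibbs.
Context {R : realType} {A : finType} (piref : A -> R).
Hypotheses (piref_simplex : in_simplex piref) (piref_gt0 : forall a, 0 < piref a).

Definition partition_fun (h : A -> R) : R := \sum_b piref b * expR (h b).

Definition gibbs (h : A -> R) : A -> R :=
  fun a => piref a * expR (h a) / partition_fun h.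

Lemma partition_fun_gt0 h : 0 < partition_fun h.
Proof.
case: (simplex_inhabited piref_simplex) => a.
rewrite /partition_fun (bigD1 a) //=; apply: ltr_pwDl.
  by rewrite mulr_gt0 ?expR_gt0.
by apply: sumr_ge0 => b _; rewrite mulr_ge0 ?ltW ?expR_gt0.
Qed.

Lemma gibbs_gt0 h a : 0 < gibbs h a.
Proof. by rewrite divr_gt0 ?mulr_gt0 ?expR_gt0 ?partition_fun_gt0. Qed.

Lemma gibbs_sum1 h : \sum_a gibbs h a = 1.
Proof. by rewrite -big_distrl /= divff // gt_eqF ?partition_fun_gt0. Qed.

Lemma gibbs_simplex h : in_simplex (gibbs h).
Proof. by split; [move=> a; exact: ltW (gibbs_gt0 h a) | exact: gibbs_sum1]. Qed.

Lemma ln_gibbs h a : ln (gibbs h a) = ln (piref a) + h a - ln (partition_fun h).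
Proof.
by rewrite ln_div ?lnM ?expRK ?posrE ?mulr_gt0 ?expR_gt0 ?partition_fun_gt0.
Qed.

Lemma gibbs0 : gibbs (fun=> 0) = piref.
Proof.
apply: funext => a; rewrite /gibbs /partition_fun.
under eq_bigr do rewrite expR0 mulr1.
by case: piref_simplex => _ ->; rewrite expR0 mulr1 divr1.
Qed.

Lemma KL_gibbs (h p : A -> R) : in_simplex p ->
  KL p (gibbs h) = KL p piref - inner p h + ln (partition_fun h).
Proof.
case=> p0 p1.
rewrite -[ln _]mul1r -p1 big_distrl /= /KL /inner -sumrB -big_split /=.
apply: eq_bigr => a _; case: eqP => [->|/eqP pa]; first by rewrite !mul0r; ring.
have pa0 : 0 < p a by rewrite lt_def pa p0.
rewrite !ln_div ?posrE ?gibbs_gt0 ?mulr_gt0 ?expR_gt0 ?partition_fun_gt0 //.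
by rewrite lnM ?posrE ?expR_gt0 // expRK; ring.
Qed.

Lemma gibbs_maximizer (h p : A -> R) : in_simplex p ->
  inner p h - KL p piref <= inner (gibbs h) h - KL (gibbs h) piref.
Proof.
move=> p_simplex.
have := KL_gibbs h _ p_simplex; have := KL_gibbs h _ (gibbs_simplex h).
rewrite KL_self.
have := KL_ge0 p (gibbs h) p_simplex (gibbs_gt0 h) ltac:(by rewrite gibbs_sum1).
lra.
Qed.

Lemma mwu_step_gibbs (eta : R) (t : nat) (q h : A -> R) : (0 < t)%N ->
  mwu_step eta piref t q (gibbs h) =
  gibbs (fun a => (t%:R - 1) / t%:R * h a + eta / t%:R * q a).
Proof.
move=> t_gt0; set h' := fun a => _.
have t0 : t%:R != 0 :> R by rewrite pnatr_eq0 -lt0n.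
set c := expR (- ((t%:R - 1) / t%:R * ln (partition_fun h))).
have weightE a : powR (piref a) t%:R^-1 * powR (gibbs h a) ((t%:R - 1) / t%:R) *
    expR (eta / t%:R * q a) = c * (piref a * expR (h' a)).
  rewrite /powR (gt_eqF (piref_gt0 a)) (gt_eqF (gibbs_gt0 _ a)) ln_gibbs.
  have -> : piref a * expR (h' a) = expR (ln (piref a) + h' a).
    by rewrite expRD lnK // posrE.
  by rewrite /c -!expRD; congr expR; rewrite /h'; field.
apply: funext => a; rewrite /mwu_step.
under eq_bigr do rewrite weightE.
rewrite weightE -big_distrr /= /gibbs -/(partition_fun _) invfM mulrACA.
by rewrite mulfV ?mul1r // gt_eqF ?expR_gt0.
Qed.

Lemma gibbs_ratio_le (h h' : A -> R) (d : R) : (forall a, `|h' a - h a| <= d) ->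
  forall a, gibbs h' a <= expR (d + d) * gibbs h a.
Proof.
move=> hd a.
have Z_le : expR (- d) * partition_fun h <= partition_fun h'.
  rewrite /partition_fun big_distrr /=; apply: ler_sum => b _.
  rewrite mulrCA -expRD ler_pM2l // ler_expR.
  by have := hd b; rewrite ler_norml; lra.
have Z0 := partition_fun_gt0 h.
apply: (@le_trans _ _ (piref a * expR (h a + d) / (expR (- d) * partition_fun h))).
  rewrite /gibbs; apply: ler_pM.
  - by rewrite mulr_ge0 ?ltW ?expR_gt0.
  - by rewrite invr_ge0 ltW ?partition_fun_gt0.
  - rewrite ler_pM2l // ler_expR.
    by have := hd a; rewrite ler_norml; lra.
  - by rewrite lef_pV2 ?posrE ?mulr_gt0 ?expR_gt0 ?partition_fun_gt0.
rewrite /gibbs !expRD expRN le_eqVlt; apply/orP; left; apply/eqP.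
by field; rewrite !gt_eqF ?expR_gt0.
Qed.

Lemma gibbs_l1_le2 (h h' : A -> R) : \sum_a `|gibbs h' a - gibbs h a| <= 2.
Proof.
rewrite -[2]/(1 + 1) -{1}(gibbs_sum1 h') -(gibbs_sum1 h) -big_split /=.
apply: ler_sum => a _; apply: le_trans (ler_normB _ _) _.
by rewrite !ger0_norm // ltW // gibbs_gt0.
Qed.

Lemma gibbs_l1_le_expR (h h' : A -> R) (d : R) : (forall a, `|h' a - h a| <= d) ->
  \sum_a `|gibbs h' a - gibbs h a| <= 2 * (expR (d + d) - 1).
Proof.
move=> hd.
have hd' a : `|h a - h' a| <= d by rewrite distrC.
have d0 : 0 <= d.
  by case: (simplex_inhabited piref_simplex) => a; exact: le_trans (hd a).
set E := expR (d + d).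
have E1 : 1 <= E by rewrite /E -expR0 ler_expR; lra.
have -> : 2 * (E - 1) = \sum_a (E - 1) * (gibbs h' a + gibbs h a).
  by rewrite -big_distrr big_split /= !gibbs_sum1 mulrC.
apply: ler_sum => a _.
have r1 := gibbs_ratio_le _ _ _ hd a; have r2 := gibbs_ratio_le _ _ _ hd' a.
have g1 := gibbs_gt0 h a; have g2 := gibbs_gt0 h' a.
rewrite -/E in r1 r2.
by rewrite ler_norml; apply/andP; split; nra.
Qed.

End Gibbs.

Section FTRL.
Variables (R : realType) (A : finType) (piref : A -> R) (eta : R) (Q : nat -> A -> R).
Hypotheses (piref_simplex : in_simplex piref) (piref_gt0 : forall a, 0 < piref a).
Hypotheses (eta_gt0 : 0 < eta) (Q_le1 : forall t, (1 <= t)%N -> forall a, `|Q t a| <= 1).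

Definition cum_payoff (n : nat) (a : A) : R := \sum_(1 <= s < n.+1) Q s a.

Definition ftrl_logit (n : nat) (a : A) : R := eta / n%:R * cum_payoff n a.

Definition iterate (n : nat) : A -> R := pi_iter eta piref Q n.
Definition obj (t : nat) : (A -> R) -> R := reg_obj eta piref (Q t).
Arguments iterate : simpl never.
Arguments obj : simpl never.

Lemma cum_payoffS n a : cum_payoff n.+1 a = cum_payoff n a + Q n.+1 a.
Proof. by rewrite /cum_payoff big_nat_recr. Qed.

Lemma ftrl_logitS n a :
  ftrl_logit n.+1 a = n%:R / n.+1%:R * ftrl_logit n a + eta / n.+1%:R * Q n.+1 a.
Proof.
rewrite /ftrl_logit cum_payoffS; case: n => [|n].
  by rewrite /cum_payoff big_geq //; ring.
by field; rewrite !(addrC _ n%:R) natr1 -natrD !pnatr_eq0 addn2.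
Qed.

Lemma iterate_gibbs n : iterate n = gibbs piref (ftrl_logit n).
Proof.
rewrite /iterate; elim: n => [|n IH] /=.
  rewrite -{1}(gibbs0 _ piref_simplex); congr gibbs; apply: funext => a.
  by rewrite /ftrl_logit /cum_payoff big_geq // mulr0.
rewrite IH mwu_step_gibbs //; congr gibbs; apply: funext => a.
by rewrite ftrl_logitS -[n.+1%:R]natr1 addrK.
Qed.

Lemma iterate_simplex n : in_simplex (iterate n).
Proof. by rewrite iterate_gibbs; exact: gibbs_simplex. Qed.

Lemma sum_obj n pi : \sum_(1 <= s < n.+1) obj s pi =
  inner pi (cum_payoff n) - n%:R * eta^-1 * KL pi piref.
Proof.
elim: n => [|n IH].
  rewrite big_geq // /inner big1 ?mul0r ?subr0 // => a _.
  by rewrite /cum_payoff big_geq // mulr0.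
rewrite big_nat_recr //= IH /obj /reg_obj /inner mulrSr.
under [\sum_a pi a * cum_payoff n.+1 a]eq_bigr do rewrite cum_payoffS mulrDr.
rewrite big_split /=; ring.
Qed.

(* The cumulative objective is n / eta times the Gibbs variational functional
   of [ftrl_logit n]. *)
Lemma iterate_maximizes_sum_obj n pi : in_simplex pi ->
  \sum_(1 <= s < n.+1) obj s pi <= \sum_(1 <= s < n.+1) obj s (iterate n).
Proof.
move=> pi_simplex; case: n => [|n]; first by rewrite !big_geq.
have n0 : n.+1%:R != 0 :> R by rewrite pnatr_eq0.
have innerE x : inner x (cum_payoff n.+1) = n.+1%:R / eta * inner x (ftrl_logit n.+1).
  rewrite /inner /ftrl_logit big_distrr /=; apply: eq_bigr => a _.
  by field; rewrite addrC natr1 n0 gt_eqF.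
rewrite !sum_obj !innerE iterate_gibbs -!mulrBr; apply: ler_wpM2l.
- by rewrite divr_ge0 ?ltW.
- exact: gibbs_maximizer.
Qed.

Lemma be_the_leader T :
  \sum_(1 <= t < T.+1) obj t (iterate T) <= \sum_(1 <= t < T.+1) obj t (iterate t).
Proof.
elim: T => [|T IH]; first by rewrite !big_geq.
rewrite big_nat_recr //= [leRHS]big_nat_recr //= lerD2r.
exact: le_trans (iterate_maximizes_sum_obj _ _ (iterate_simplex T.+1)) IH.
Qed.

Lemma sum_obj_increment T :
  \sum_(1 <= t < T.+1) (obj t (iterate t) - obj t (iterate t.-1)) =
  \sum_(1 <= t < T.+1) (inner (iterate t) (Q t) - inner (iterate t.-1) (Q t))
  - eta^-1 * KL (iterate T) piref.
Proof.
elim: T => [|T IH]; first by rewrite !big_geq // /iterate KL_self mulr0 subr0.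
by rewrite big_nat_recr //= IH [in RHS]big_nat_recr //= /obj /reg_obj; ring.
Qed.

Lemma regret_le_stability T pi : in_simplex pi ->
  \sum_(1 <= t < T.+1) obj t pi - \sum_(1 <= t < T.+1) obj t (iterate t.-1) <=
  \sum_(1 <= t < T.+1) (inner (iterate t) (Q t) - inner (iterate t.-1) (Q t)).
Proof.
move=> pi_simplex.
have KL_iterate : 0 <= KL (iterate T) piref.
  by apply: KL_ge0 => //; [exact: iterate_simplex | case: piref_simplex => _ ->].
apply: (@le_trans _ _ (\sum_(1 <= t < T.+1) (obj t (iterate t) - obj t (iterate t.-1)))).
  rewrite [leRHS]sumrB lerD2r; apply: le_trans (be_the_leader T).
  exact: iterate_maximizes_sum_obj.
by rewrite sum_obj_increment gerBl mulr_ge0 // invr_ge0 ltW.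
Qed.

Lemma norm_cum_payoff_le n a : `|cum_payoff n a| <= n%:R.
Proof.
rewrite /cum_payoff; apply: le_trans (ler_norm_sum _ _ _) _.
apply: (@le_trans _ _ (\sum_(1 <= s < n.+1) (1 : R))).
  by apply: ler_sum_nat => s /andP[s_ge1 _]; exact: Q_le1.
by rewrite sumr_const_nat subSS subn0.
Qed.

Lemma norm_ftrl_logit_le n a : `|ftrl_logit n a| <= eta.
Proof.
case: n => [|n].
  by rewrite /ftrl_logit /cum_payoff big_geq // mulr0 normr0 ltW.
have c0 : 0 <= eta / n.+1%:R by rewrite divr_ge0 ?ltW.
rewrite /ftrl_logit normrM ger0_norm //.
apply: le_trans (ler_wpM2l c0 (norm_cum_payoff_le _ a)) _.
by rewrite divfK ?pnatr_eq0.
Qed.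

Lemma ftrl_logit_step_le n a :
  `|ftrl_logit n.+1 a - ftrl_logit n a| <= 2 * eta / n.+1%:R.
Proof.
have n0 : 0 < n.+1%:R :> R by rewrite ltr0n.
have -> : ftrl_logit n.+1 a - ftrl_logit n a =
    (eta * Q n.+1 a - ftrl_logit n a) / n.+1%:R.
  by rewrite ftrl_logitS; field; rewrite addrC natr1 pnatr_eq0.
rewrite normrM normfV (gtr0_norm n0) ler_pM2r ?invr_gt0 //.
apply: le_trans (ler_normB _ _) _.
have := norm_ftrl_logit_le n a.
have : `|eta * Q n.+1 a| <= eta.
  by rewrite normrM (gtr0_norm eta_gt0); apply: ler_piMr; [exact: ltW | exact: Q_le1].
lra.
Qed.

Lemma iterate_step_l1 n :
  \sum_a `|iterate n.+1 a - iterate n a| <= 8 * expR 1 * eta / n.+1%:R.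
Proof.
rewrite !iterate_gibbs.
set d := 2 * eta / n.+1%:R.
have -> : 8 * expR 1 * eta / n.+1%:R = 2 * expR 1 * (d + d).
  by rewrite /d; field; rewrite addrC natr1 pnatr_eq0.
apply: le_linear_of_le_expR_subr1.
- by rewrite addr_ge0 // divr_ge0 ?mulr_ge0 ?ltW.
- exact: gibbs_l1_le2.
- exact: gibbs_l1_le_expR (ftrl_logit_step_le n).
Qed.

Lemma ftrl_regret_le T pi : (1 <= T)%N -> in_simplex pi ->
  \sum_(1 <= t < T.+1) obj t pi - \sum_(1 <= t < T.+1) obj t (iterate t.-1) <=
  8 * expR 1 * eta * (1 + ln (T%:R : R)).
Proof.
move=> T_ge1 pi_simplex; apply: le_trans (regret_le_stability _ _ pi_simplex) _.
apply: (@le_trans _ _ (\sum_(1 <= t < T.+1) 8 * expR 1 * eta * t%:R^-1)).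
  apply: ler_sum_nat => t /andP[t_ge1 _]; case: t t_ge1 => [//|t] t_ge1 /=.
  apply: le_trans (inner_subl_le_l1 _ _ _ (Q_le1 _ t_ge1)) _.
  exact: iterate_step_l1.
rewrite -big_distrr /=; apply: ler_wpM2l; last exact: harmonic_le_1Dln.
by rewrite mulr_ge0 ?ltW ?expR_gt0.
Qed.

End FTRL.

Theorem mainTheorem8 (R : realType) :
  exists C : R, 0 < C /\
  forall (A : finType) (piref : A -> R) (eta : R) (Q : nat -> A -> R),
    in_simplex piref ->
    (forall a, 0 < piref a) ->
    0 < eta ->
    (forall t, (1 <= t)%N -> forall a, `|Q t a| <= 1) ->
    forall T : nat, (1 <= T)%N ->
    forall pi : A -> R, in_simplex pi ->
      T%:R^-1 * \sum_(1 <= t < T.+1) reg_obj eta piref (Q t) pi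
      - T%:R^-1 * \sum_(1 <= t < T.+1)
                    reg_obj eta piref (Q t) (pi_iter eta piref Q t.-1)
      <= C * (eta * (1 + ln (T%:R : R)) / T%:R).
Proof.
exists (8 * expR 1); split; first by rewrite mulr_gt0 ?expR_gt0.
move=> A piref eta Q piref_simplex piref_gt0 eta_gt0 Q_le1 T T_ge1 pi pi_simplex.
have -> : 8 * expR 1 * (eta * (1 + ln (T%:R : R)) / T%:R) =
    T%:R^-1 * (8 * expR 1 * eta * (1 + ln (T%:R : R))) by ring.
rewrite -mulrBr ler_pM2l ?invr_gt0 ?ltr0n //.
exact: ftrl_regret_le.
Qed.
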